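(* For any $F\in\mathscr{F}_2$ and $i\in[F]$: (i) $\mathcal{P}^2_{\ddot{F},i}=\{01,10,11\}$ if $|\mathcal{P}^2_{F,i}|=3$, and $\mathcal{P}^2_{\ddot{F},i}=\{00,01,10,11\}$ if $|\mathcal{P}^2_{F,i}|=4$; (ii) for any $s\in\mathcal{S}$, $\bar{\mathcal{P}}^2_{\ddot{F},i}(\ddot{f}_i(s))=\emptyset$ if $\bar{\mathcal{P}}^0_{F,i}(f_i(s))=\emptyset$, and $\bar{\mathcal{P}}^2_{\ddot{F},i}(\ddot{f}_i(s))=\{00\}$ if $\bar{\mathcal{P}}^0_{F,i}(f_i(s))\ne\emptyset$.
   Context: $\mathcal{S}$ is a finite source alphabet with $|\mathcal{S}|\ge 2$ and $\mathcal{C}=\{0,1\}$; $\mathcal{A}^k,\mathcal{A}^{\ast},\mathcal{A}^{+}$ are sequences of length $k$, finite, positive finite length; $\lambda$ empty sequence; $\preceq$ prefix, $\prec$ proper prefix; $\mathrm{suff}(x_1\cdots x_n)=x_2\cdots x_n$; $\bar{c}=1-c$ for $c\in\mathcal{C}$. A code-tuple $F$ with $m\ge1$ code tables consists of maps $f_i:\mathcal{S}\to\mathcal{C}^{\ast}$ and $\tau_i:\mathcal{S}\to\{0,\dots,m-1\}$, $i\in[F]=\{0,\dots,m-1\}$. $f_i^{\ast}(\lambda)=\lambda$, $f_i^{\ast}(\pmb{x})=f_i(x_1)f^{\ast}_{\tau_i(x_1)}(\mathrm{suff}(\pmb{x}))$. For integer $k\ge0$, $\pmb{b}\in\mathcal{C}^{\ast}$: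 $\mathcal{P}^k_{F,i}(\pmb{b})$ is the set of $\pmb{c}\in\mathcal{C}^k$ such that some $\pmb{x}=x_1\cdots x_n\in\mathcal{S}^{+}$ has $f_i^{\ast}(\pmb{x})\succeq\pmb{b}\pmb{c}$ and $f_i(x_1)\succeq\pmb{b}$; $\bar{\mathcal{P}}^k_{F,i}(\pmb{b})$ the same with $f_i(x_1)\succ\pmb{b}$; $\mathcal{P}^k_{F,i}=\mathcal{P}^k_{F,i}(\lambda)$. $F\in\mathscr{F}_{2\text{-}\mathrm{dec}}$ if $\mathcal{P}^2_{F,\tau_i(s)}\cap\bar{\mathcal{P}}^2_{F,i}(f_i(s))=\emptyset$ for all $i,s$, and $\mathcal{P}^2_{F,\tau_i(s)}\cap\mathcal{P}^2_{F,\tau_i(s')}=\emptyset$ whenever $s\ne s'$, $f_i(s)=f_i(s')$. Fix $\mu:\mathcal{S}\to(0,1]$ with $\sum_s\mu(s)=1$; $Q_{i,j}(F)=\sum_{s:\tau_i(s)=j}\mu(s)$; $F\in\mathscr{F}_{\mathrm{reg}}$ if $\pmb{\pi}Q(F)=\pmb{\pi}$, $\sum_i\pi_i=1$ has a unique solution. $\mathscr{F}_2=\{F\in\mathscr{F}_{\mathrm{reg}}\cap\mathscr{F}_{2\text{-}\mathrm{dec}}:|\mathcal{P}^2_{F,i}|\ge3\ \forall i\in[F]\}$ (every such $F$ satisfies $\mathcal{P}^1_{F,i}=\{0,1\}$ for all $i$). $\gamma$-decomposition: for $F\in\mathscr{F}_2$, $i\in[F]$, $s\in\mathcal{S}$,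 the symbols $s'$ with $f_i(s')\prec f_i(s)$ have pairwise distinct codewords; list them together with $s$ as $s_1,\dots,s_\rho$ with $s_\rho=s$ and $f_i(s_1)\prec\cdots\prec f_i(s_\rho)$; set $\gamma(s_1)=f_i(s_1)$ and $f_i(s_r)=f_i(s_{r-1})\gamma(s_r)$ for $r\ge2$. The code-tuple $\ddot{F}$ (with $|F|$ tables): $\ddot{\tau}_i=\tau_i$ and $\ddot{f}_i(s)=\ddot{\gamma}(s_1)\cdots\ddot{\gamma}(s_\rho)$ where, writing $\gamma(s_r)=g_1g_2\cdots g_l$: $\ddot{\gamma}(s_r)=\gamma(s_r)$ if $r=1$ and $|\mathcal{P}^2_{F,i}|=4$; $\ddot{\gamma}(s_r)=1$ if $r=1$, $|\mathcal{P}^2_{F,i}|=3$, $|\gamma(s_r)|=1$; $\ddot{\gamma}(s_r)=01g_3\cdots g_l$ if $r=1$, $|\mathcal{P}^2_{F,i}|=3$, $|\gamma(s_r)|\ge2$, $g_1\bar{g_2}\notin\mathcal{P}^2_{F,i}$; $\ddot{\gamma}(s_r)=1g_2g_3\cdots g_l$ if $r=1$, $|\mathcal{P}^2_{F,i}|=3$, $|\gamma(s_r)|\ge2$, $g_1\bar{g_2}\in\mathcal{P}^2_{F,i}$; $\ddot{\gamma}(s_r)=00g_3\cdots g_l$ if $r\ge2$. *)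

From HB Require Import structures.
From mathcomp Require Import all_boot all_order all_algebra.
From mathcomp Require Import boolp reals.
Set Implicit Arguments. Unset Strict Implicit. Unset Printing Implicit Defensive.
Import Order.TTheory GRing.Theory Num.Theory.

(* Code alphabet C = {0,1} is bool (false = 0, true = 1).
   A code-tuple with m tables over source alphabet S. *)
Record code_tuple (S : finType) (m : nat) := CodeTuple {
  ct_f   : 'I_m -> S -> seq bool;
  ct_tau : 'I_m -> S -> 'I_m }.

Section CodeTuple.
Variables (S : finType) (m : nat).
Implicit Types (F : code_tuple S m) (i : 'I_m) (b w : seq bool).

Definition pprefix b w : bool := prefix b w && (size b < size w).

Fixpoint fstar F i (x : seq S) : seq bool :=
  match x with
  | [::] => [::]
  | a :: x' => ct_f F i a ++ fstar F (ct_tau F i a) x'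
  end.

Definition Pk F i b (k : nat) : {set k.-tuple bool} :=
  [set c : k.-tuple bool | `[< exists (x1 : S) (x' : seq S),
      prefix (b ++ val c) (fstar F i (x1 :: x')) /\ prefix b (ct_f F i x1) >]].

Definition Pbark F i b (k : nat) : {set k.-tuple bool} :=
  [set c : k.-tuple bool | `[< exists (x1 : S) (x' : seq S),
      prefix (b ++ val c) (fstar F i (x1 :: x')) /\ pprefix b (ct_f F i x1) >]].

Definition P2 F i : {set 2.-tuple bool} := Pk F i [::] 2.

Definition two_dec F : Prop :=
  (forall i (s : S), P2 F (ct_tau F i s) :&: Pbark F i (ct_f F i s) 2 = set0) /\
  (forall i (s s' : S), s != s' -> ct_f F i s = ct_f F i s' ->
      P2 F (ct_tau F i s) :&: P2 F (ct_tau F i s') = set0).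

Section Reg.
Variable (R : realType) (mu : S -> R).

Definition Qmx F : 'M[R]_m :=
  \matrix_(i < m, j < m) (\sum_(s : S | ct_tau F i s == j) mu s)%R.

Definition regular F : Prop :=
  exists! pi : 'rV[R]_m, (pi *m Qmx F)%R = pi /\ (\sum_(j < m) pi ord0 j)%R = 1%R.

Definition in_F2 F : Prop :=
  regular F /\ two_dec F /\ (forall i, 3 <= #|P2 F i|).
End Reg.

(* gamma-decomposition: the chain f_i(s_1) < ... < f_i(s_rho) = f_i(s)
   consists of the codewords (of table i) that are proper prefixes of f_i(s),
   followed by f_i(s); sorted by length (they form a prefix chain). *)
Definition chain F i (s : S) : seq (seq bool) :=
  sort (fun u v => size u <= size v)
       (undup [seq ct_f F i s' | s' <- enum S & pprefix (ct_f F i s') (ct_f F i s)])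
  ++ [:: ct_f F i s].

Definition gammas F i (s : S) : seq (seq bool) :=
  pairmap (fun u v => drop (size u) v) [::] (chain F i s).

Definition ddgamma_first F i (g : seq bool) : seq bool :=
  if #|P2 F i| == 4 then g
  else if #|P2 F i| == 3 then
    match g with
    | [:: _] => [:: true]
    | g1 :: g2 :: rest =>
        if [tuple g1; ~~ g2] \in P2 F i then true :: g2 :: rest
        else [:: false, true & rest]
    | [::] => [::] (* case not covered by the paper *)
    end
  else g (* case not covered by the paper *).

Definition ddgamma_rest (g : seq bool) : seq bool := [:: false, false & drop 2 g].

Definition ddot_f F i (s : S) : seq bool :=
  match gammas F i s with
  | [::] => [::]
  | g1 :: gs => flatten (ddgamma_first F i g1 :: map ddgamma_rest gs)
  end.

Definition ddot F : code_tuple S m := CodeTuple (ddot_f F) (ct_tau F).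

End CodeTuple.

From HB Require Import structures.
From mathcomp Require Import all_boot all_order all_algebra.
From mathcomp Require Import boolp reals.
From mathcomp Require Import zify.
Set Implicit Arguments. Unset Strict Implicit. Unset Printing Implicit Defensive.

(* Since P^2_{F,tau_i(s)} has at least three elements and is disjoint from
   \bar P^2_{F,i}(f_i(s)), the latter has at most one element. Hence a codeword
   that properly extends f_i(s) does so by at least two bits, and all such
   extensions agree on these two bits. Overwriting them by 00 in every gamma(s_r),
   r >= 2, therefore loses no information: f_i(s) |-> \ddot f_i(s) preserves and
   reflects the prefix order, and \ddot f_i(s') = \ddot f_i(s) 00 ... whenever
   f_i(s) is a proper prefix of f_i(s'); this gives (ii).
   For (i): if |P^2_{F,i}| = 3 with missing pair ab, no codeword of table i is
   empty or equal to a, and the recoding of gamma(s_1) makes every \ddot f_i(s)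
   start with 1 or 01 while realising 01, 10 and 11. If |P^2_{F,i}| = 4, gamma(s_1)
   is kept; an empty codeword forces |P^2_{F,tau_i(s)}| = 3, and 00 then comes
   from any longer codeword. *)

Section Prefix.
Variable T : eqType.
Implicit Types (x y : T) (u v w : seq T).

Definition prefix_cmp u v := prefix u v || prefix v u.

Lemma prefix_cmp0s v : prefix_cmp [::] v.
Proof. by rewrite /prefix_cmp prefix0s. Qed.

Lemma prefix_cmp_cons x y u v : prefix_cmp (x :: u) (y :: v) = (x == y) && prefix_cmp u v.
Proof. by rewrite /prefix_cmp !prefix_cons [y == x]eq_sym; case: (x == y). Qed.

Lemma prefix_cat2l w u v : prefix (w ++ u) (w ++ v) = prefix u v.
Proof. by rewrite prefix_catr // eqxx. Qed.

Lemma prefix_cmp_cat2l w u v : prefix_cmp (w ++ u) (w ++ v) = prefix_cmp u v.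
Proof. by rewrite /prefix_cmp !prefix_cat2l. Qed.

Lemma prefix_size_prefix u v w : prefix u w -> prefix v w -> size u <= size v -> prefix u v.
Proof.
rewrite !prefixE => /eqP Hu /eqP Hv Huv.
by rewrite -Hv take_takel // Hu.
Qed.

Lemma prefixes_cmp u v w : prefix u w -> prefix v w -> prefix_cmp u v.
Proof.
move=> Hu Hv; rewrite /prefix_cmp.
case: (leqP (size u) (size v)) => [Huv|/ltnW Hvu].
  by rewrite (prefix_size_prefix Hu Hv Huv).
by rewrite (prefix_size_prefix Hv Hu Hvu) orbT.
Qed.

Lemma prefix_cat_cmp u u' v v' : prefix (u ++ u') (v ++ v') -> prefix_cmp u v.
Proof. by move/catl_prefix/prefixes_cmp; apply; apply: prefix_prefix. Qed.

End Prefix.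

Lemma bool_neqE (x y : bool) : x != y -> x = ~~ y.
Proof. by case: x; case: y. Qed.

Section ProperPrefix.
Implicit Types u v w : seq bool.

Lemma pprefix_catr u v : pprefix u (u ++ v) = (v != [::]).
Proof. by rewrite /pprefix prefix_prefix size_cat -{1}[size u]addn0 ltn_add2l lt0n size_eq0. Qed.

Lemma pprefixE u v : pprefix u v = prefix u v && (u != v).
Proof.
have [/prefixP[z ->]|Huv] := boolP (prefix u v); last by rewrite /pprefix (negbTE Huv).
rewrite pprefix_catr; case: z => [|a z]; first by rewrite cats0 !eqxx.
by apply/esym/eqP => /(congr1 size); rewrite size_cat /=; lia.
Qed.

Lemma pprefixW u v : pprefix u v -> prefix u v.
Proof. by case/andP. Qed.

Lemma pprefixP u w : reflect (exists2 g, w = u ++ g & g != [::]) (pprefix u w).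
Proof.
apply: (iffP idP) => [Huw|[g -> Hg]]; last by rewrite pprefix_catr.
by have /prefixP[g Ew] := pprefixW Huw; exists g; rewrite // -(pprefix_catr u) -Ew.
Qed.

Lemma pprefix_irr : irreflexive pprefix.
Proof. by move=> u; rewrite /pprefix ltnn andbF. Qed.

Lemma prefix_pprefix_trans u v w : prefix u v -> pprefix v w -> pprefix u w.
Proof.
move=> Huv /andP[Hvw Hs]; rewrite /pprefix (prefix_trans Huv Hvw).
exact: leq_ltn_trans (size_prefix Huv) Hs.
Qed.

Lemma pprefix_prefix_trans u v w : pprefix u v -> prefix v w -> pprefix u w.
Proof.
move=> /andP[Huv Hs] Hvw; rewrite /pprefix (prefix_trans Huv Hvw).
exact: leq_trans Hs (size_prefix Hvw).
Qed.

Lemma pprefix_trans : transitive pprefix.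
Proof. by move=> v u w /pprefixW Huv; apply: prefix_pprefix_trans. Qed.

Lemma sorted_size_pprefix w (l : seq (seq bool)) : all (fun u => prefix u w) l -> uniq l ->
  sorted (fun u v : seq bool => size u <= size v) l -> pairwise pprefix l.
Proof.
rewrite sorted_pairwise; last by move=> v u u'; apply: leq_trans.
elim: l => //= u l IH /andP[Hu Hl] /andP[Hul Hq] /andP[Hs Hp].
rewrite IH // andbT; apply/allP => v Hv.
rewrite pprefixE (prefix_size_prefix Hu (allP Hl v Hv) (allP Hs v Hv)).
by apply: contraNneq Hul => ->.
Qed.

End ProperPrefix.

Section Tuple2.
Variable T : finType.

Lemma tuple2_ind (P : 2.-tuple T -> Prop) : (forall x y, P [tuple x; y]) -> forall c, P c.
Proof. by move=> HP [[|x [|y []]] // Hc]; have -> : Tuple Hc = [tuple x; y] by apply: val_inj. Qed.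

Lemma eq_tuple2 (x y x' y' : T) : ([tuple x; y] == [tuple x'; y']) = (x == x') && (y == y').
Proof. by rewrite -val_eqE /= !eqseq_cons andbT. Qed.

End Tuple2.

Lemma card_tuple2_bool : #|{: 2.-tuple bool}| = 4.
Proof. by rewrite card_tuple card_bool. Qed.

Lemma card_tuple2_disjoint (A B : {set 2.-tuple bool}) : A :&: B = set0 -> #|A| + #|B| <= 4.
Proof. by move=> AB0; rewrite -cardsUI AB0 cards0 addn0 -card_tuple2_bool max_card. Qed.

Lemma card3_tuple2 (A : {set 2.-tuple bool}) : #|A| = 3 -> exists a b, forall x y,
  ([tuple x; y] \in A) = ~~ ((x == a) && (y == b)).
Proof.
move=> HA; have /cards1P[c AC] : #|~: A| == 1.
  by have := cardsC A; rewrite card_tuple2_bool HA => /eqP; rewrite -[4]/(3 + 1) eqn_add2l.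
elim/tuple2_ind: c AC => a b AC; exists a, b => x y.
by rewrite -eq_tuple2 -in_set1 -AC inE negbK.
Qed.

Lemma card4_tuple2 (A : {set 2.-tuple bool}) : #|A| = 4 -> forall c, c \in A.
Proof.
move=> HA c; have AC0 : ~: A = set0.
  by apply: cards0_eq; have := cardsC A; rewrite card_tuple2_bool HA => -[].
by apply/negPn; rewrite -in_setC AC0 inE.
Qed.

Lemma tuple2_head_mem (A : {set 2.-tuple bool}) x : 3 <= #|A| -> exists y, [tuple x; y] \in A.
Proof.
move=> HA; have [/existsP //|] := boolP [exists y, [tuple x; y] \in A].
rewrite negb_exists => /forallP Hx.
have Bx : #|[set [tuple x; y] | y : bool]| = 2.
  by rewrite card_imset ?card_bool // => y y' /eqP; rewrite eq_tuple2 eqxx => /eqP.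
suff /card_tuple2_disjoint : A :&: [set [tuple x; y] | y : bool] = set0 by rewrite Bx; lia.
apply/setP=> c; rewrite !inE.
by apply/negbTE/andP=> -[Hc /imsetP[y _ E]]; have := Hx y; rewrite -E Hc.
Qed.

Section CodeTupleFacts.
Variables (S : finType) (m : nat).
Implicit Types (F : code_tuple S m) (k : 'I_m).

Lemma fstar_cons F k a x : fstar F k (a :: x) = ct_f F k a ++ fstar F (ct_tau F k a) x.
Proof. by []. Qed.

Lemma P2P F k c :
  reflect (exists s w, prefix (val c) (fstar F k (s :: w))) (c \in P2 F k).
Proof.
rewrite inE; apply: (iffP (asboolP _)) => [[s [w [Hc _]]]|[s [w Hc]]]; exists s, w => //.
by rewrite prefix0s.
Qed.

Lemma PbarkP F k b n c : reflect (exists s w,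
    prefix (b ++ val c) (fstar F k (s :: w)) /\ pprefix b (ct_f F k s))
  (c \in Pbark F k b n).
Proof. by rewrite inE; apply: asboolP. Qed.

Lemma P2_codeword F k s c : prefix (val c) (ct_f F k s) -> c \in P2 F k.
Proof. by move=> Hc; apply/P2P; exists s, [::]; rewrite fstar_cons prefix_catl. Qed.

End CodeTupleFacts.

Arguments fstar : simpl never.

Section TwoDecodable.
Variables (S : finType) (m : nat) (F : code_tuple S m).
Hypothesis HS : 1 < #|S|.
Hypothesis F2dec : two_dec F.
Hypothesis P2_ge3 : forall k, 3 <= #|P2 F k|.
Implicit Types (k : 'I_m) (s t : S).

Local Notation f := (ct_f F).
Local Notation tau := (ct_tau F).

Lemma card_P2 k : #|P2 F k| = 3 \/ #|P2 F k| = 4.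
Proof. by have := P2_ge3 k; have := max_card (P2 F k); rewrite card_tuple2_bool; lia. Qed.

Lemma fstar_head k x : exists s w, prefix [:: x] (fstar F k (s :: w)).
Proof.
have [y /P2P[s [w Hp]]] := tuple2_head_mem x (P2_ge3 k).
by exists s, w; apply: (@catl_prefix _ [:: x] _ [:: y]).
Qed.

Lemma Pbark2_eq k s c c' :
  c \in Pbark F k (f k s) 2 -> c' \in Pbark F k (f k s) 2 -> c = c'.
Proof.
have : #|Pbark F k (f k s) 2| <= 1.
  by have := card_tuple2_disjoint (F2dec.1 k s); have := P2_ge3 (tau k s); lia.
by move/card_le1_eqP => Hle1 Hc Hc'; rewrite (Hle1 c c').
Qed.

(* A one-bit extension [a] would put both [[a; 0]] and [[a; 1]] into
   [Pbark F k (f k s) 2], which has at most one element. *)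
Lemma codeword_ext_Pbark k s t g : f k t = f k s ++ g -> g != [::] ->
  exists2 c : 2.-tuple bool, c \in Pbark F k (f k s) 2 & prefix (val c) g.
Proof.
move=> Et Hg; have Hst : pprefix (f k s) (f k t) by rewrite Et pprefix_catr.
case: g Et Hg => [|a [|b r]] Et // _.
  have Ha y : [tuple a; y] \in Pbark F k (f k s) 2.
    have [x [w Hy]] := fstar_head (tau k t) y.
    apply/PbarkP; exists t, (x :: w); split => //.
    by rewrite fstar_cons Et -catA prefix_cat2l /= eqxx.
  by have /eqP := Pbark2_eq (Ha false) (Ha true); rewrite eq_tuple2 andbF.
exists [tuple a; b]; last exact: (prefix_prefix [:: a; b] r).
apply/PbarkP; exists t, [::]; split => //.
by rewrite fstar_cons Et -catA prefix_cat2l prefix_prefix.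
Qed.

Lemma codeword_ext_take2 k s t t' g g' : f k t = f k s ++ g -> f k t' = f k s ++ g' ->
  g != [::] -> g' != [::] -> take 2 g = take 2 g'.
Proof.
move=> Et Et' /(codeword_ext_Pbark Et)[c Hc] + /(codeword_ext_Pbark Et')[c' Hc'].
by rewrite (Pbark2_eq Hc Hc') !prefixE size_tuple => /eqP-> /eqP->.
Qed.

Lemma codeword_inj k : injective (f k).
Proof.
move=> s s' Ess'; apply/eqP/negPn/negP => Hss'.
have := card_tuple2_disjoint (F2dec.2 k s s' Hss' Ess').
by have := P2_ge3 (tau k s); have := P2_ge3 (tau k s'); lia.
Qed.

Lemma exists_neq s0 : exists t, t != s0.
Proof.
have /card_gt1P[x [y [_ _ Hxy]]] := HS.
by case: (eqVneq x s0) => [<-|Hx]; [exists y; rewrite eq_sym | exists x].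
Qed.

(* [P2 F k] contains the disjoint sets [P2 F (tau k s0)], of size at least 3, and
   [Pbark F k [::] 2], which is nonempty because another codeword extends [[::]]. *)
Lemma empty_codeword_card k s0 : f k s0 = [::] -> #|P2 F (tau k s0)| = 3 /\ #|P2 F k| = 4.
Proof.
move=> E0.
have sub_P2 : P2 F (tau k s0) :|: Pbark F k (f k s0) 2 \subset P2 F k.
  apply/subsetP => c; rewrite inE => /orP[/P2P[x [w Hp]] | /PbarkP[x [w [Hp _]]]];
    apply/P2P; first by exists s0, (x :: w); rewrite fstar_cons E0.
  by exists x, w; rewrite E0 in Hp.
have Pbar_gt0 : 0 < #|Pbark F k (f k s0) 2|.
  have [t Ht] := exists_neq s0.
  have Et : f k t != [::] by rewrite -E0 (inj_eq (@codeword_inj k)).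
  have Ets0 : f k t = f k s0 ++ f k t by rewrite E0.
  have [c Hc _] := codeword_ext_Pbark Ets0 Et.
  by rewrite card_gt0; apply/set0Pn; exists c.
move: (subset_leq_card sub_P2); rewrite cardsU (F2dec.1 k s0) cards0 subn0.
by have := P2_ge3 (tau k s0); have := max_card (P2 F k); rewrite card_tuple2_bool; lia.
Qed.

Lemma codeword_neq_nil k s : #|P2 F k| = 3 -> f k s != [::].
Proof. by move=> Hk; apply/eqP => /empty_codeword_card[_]; rewrite Hk. Qed.

Lemma codeword_neq_single k s a b : [tuple a; b] \notin P2 F k -> f k s != [:: a].
Proof.
apply: contraNneq => Es; have [x [w Hb]] := fstar_head (tau k s) b.
by apply/P2P; exists s, (x :: w); rewrite fstar_cons Es /= eqxx.
Qed.

Definition codeword k u := [exists s, f k s == u].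

Lemma codewordP k u : reflect (exists s, f k s = u) (codeword k u).
Proof. by apply: (iffP existsP) => -[s /eqP]; exists s. Qed.

Lemma codeword_f k s : codeword k (f k s).
Proof. by apply/codewordP; exists s. Qed.

Lemma mem_chain k s u : (u \in chain F k s) = codeword k u && prefix u (f k s).
Proof.
rewrite mem_cat mem_sort mem_undup inE; apply/idP/idP.
  case/orP => [/mapP[s'] | /eqP->]; last by rewrite codeword_f prefix_refl.
  by rewrite mem_filter => /andP[/pprefixW Hs' _] ->; rewrite codeword_f.
case/andP => /codewordP[s' <-] Hs'; have [->|Hne] := eqVneq (f k s') (f k s).
  by rewrite orbT.
by apply/orP; left; apply/mapP; exists s'; rewrite // mem_filter mem_enum pprefixE Hs' Hne.
Qed.

Lemma chain_sorted k s : sorted pprefix (chain F k s).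
Proof.
rewrite /chain; set l := sort _ _.
have l_pprefix u : u \in l -> pprefix u (f k s).
  by rewrite mem_sort mem_undup => /mapP[s']; rewrite mem_filter => /andP[Hs' _] ->.
rewrite sorted_pairwise; last exact: pprefix_trans.
rewrite pairwise_cat /= andbT allrel1r; apply/andP; split; first exact/allP.
apply: (@sorted_size_pprefix (f k s)).
- by apply/allP => u /l_pprefix/pprefixW.
- by rewrite sort_uniq undup_uniq.
- by apply: sort_sorted => u v; apply: leq_total.
Qed.

Lemma chain_sorted_eq k s l : sorted pprefix l ->
  (forall u, (u \in l) = codeword k u && prefix u (f k s)) -> chain F k s = l.
Proof.
move=> Hl Hmem; apply: (irr_sorted_eq pprefix_trans pprefix_irr) => //.
  exact: chain_sorted.
by move=> u; rewrite mem_chain Hmem.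
Qed.

Definition minimal_codeword k c := codeword k c /\ forall t, ~~ pprefix (f k t) c.

Definition covers k a b :=
  [&& pprefix a b, codeword k b & [forall t, ~~ (pprefix a (f k t) && pprefix (f k t) b)]].

Lemma path_covers k w a l : pairwise pprefix (a :: l) ->
  all (fun u => codeword k u && prefix u w) (a :: l) ->
  (forall u, codeword k u -> prefix u w -> pprefix a u -> u \in l) -> path (covers k) a l.
Proof.
elim: l a => //= b l IH a /andP[/andP[Hab Hal] /andP[Hbl Hl]].
case/and3P => _ /andP[Cb Pb] Hall Hnext.
have Hnext' u : codeword k u -> prefix u w -> pprefix b u -> u \in l.
  move=> Cu Pu Hbu; have := Hnext u Cu Pu (pprefix_trans Hab Hbu).
  by rewrite inE => /orP[/eqP Eu|//]; rewrite Eu pprefix_irr in Hbu.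
rewrite IH ?Hbl ?Cb ?Pb // andbT /covers Hab Cb /=.
apply/forallP => t; apply/negP => /andP[Hat Htb].
have := Hnext _ (codeword_f k t) (prefix_trans (pprefixW Htb) Pb) Hat.
rewrite inE => /orP[/eqP Et|Ht]; first by rewrite Et pprefix_irr in Htb.
by have := pprefix_trans (allP Hbl _ Ht) Htb; rewrite pprefix_irr.
Qed.

Lemma chain_struct k s : exists c l, [/\ chain F k s = c :: l, path (covers k) c l,
  minimal_codeword k c & prefix c (f k s)].
Proof.
have Hsort := chain_sorted k s; rewrite sorted_pairwise in Hsort; last exact: pprefix_trans.
case Es: (chain F k s) Hsort => [|c l] Hsort.
  by have := mem_chain k s (f k s); rewrite Es codeword_f prefix_refl.
have Hmem u : (u \in c :: l) = codeword k u && prefix u (f k s) by rewrite -Es mem_chain.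
have /andP[Cc Pc] : codeword k c && prefix c (f k s) by rewrite -Hmem mem_head.
exists c, l; split => //.
  apply: (path_covers (w := f k s)) => //; first by apply/allP => u; rewrite Hmem.
  move=> u Cu Pu Hcu; move: (Cu); rewrite -(andbT (codeword k u)) -Pu -Hmem inE.
  by case/orP => [/eqP Eu|//]; rewrite Eu pprefix_irr in Hcu.
split=> // t; apply/negP => Htc.
have : f k t \in c :: l by rewrite Hmem codeword_f (prefix_trans (pprefixW Htc) Pc).
rewrite inE => /orP[/eqP Et|Ht]; first by rewrite Et pprefix_irr in Htc.
by case/andP: Hsort => /allP/(_ _ Ht)/pprefix_trans/(_ Htc); rewrite pprefix_irr.
Qed.

Lemma chain_minimal k s : (forall t, ~~ pprefix (f k t) (f k s)) -> chain F k s = [:: f k s].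
Proof.
move=> Hmin; apply: chain_sorted_eq => // u; rewrite inE.
apply/eqP/andP => [->|[/codewordP[t <-] Hts]]; first by rewrite codeword_f prefix_refl.
by apply/eqP; apply: contraNT (Hmin t) => Hne; rewrite pprefixE Hts.
Qed.

Lemma chain_ext k s x : pprefix (f k s) (f k x) ->
  exists b l, chain F k x = chain F k s ++ b :: l.
Proof.
move=> Hsx; pose T := [seq u <- chain F k x | ~~ prefix u (f k s)].
have Hx : chain F k x = chain F k s ++ T.
  apply: chain_sorted_eq; last first.
    move=> u; rewrite mem_cat mem_chain mem_filter mem_chain.
    case Hu: (prefix u (f k s)); case: (codeword k u) => //=.
    by rewrite (prefix_trans Hu (pprefixW Hsx)).
  rewrite sorted_pairwise; last exact: pprefix_trans.
  rewrite pairwise_cat -!sorted_pairwise; try exact: pprefix_trans.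
  rewrite chain_sorted sorted_filter ?andbT; [|exact: pprefix_trans|exact: chain_sorted].
  apply/allrelP => u v; rewrite mem_chain => /andP[_ Hu].
  rewrite mem_filter mem_chain => /andP[Hv /andP[_ Hvx]].
  have := prefixes_cmp (prefix_trans Hu (pprefixW Hsx)) Hvx.
  case/orP => [Huv|Hvu]; last by rewrite (prefix_trans Hvu Hu) in Hv.
  by rewrite pprefixE Huv; apply: contraNneq Hv => <-.
have : f k x \in T.
  rewrite mem_filter mem_chain codeword_f prefix_refl !andbT.
  by apply/negP => /(pprefix_prefix_trans Hsx); rewrite pprefix_irr.
by case: T Hx => // b l Hx _; exists b, l.
Qed.

(* [ddot_rest a l] is the paper's ddot-gamma(s_2) ... ddot-gamma(s_rho) for the
   chain [a :: l]. *)
Definition ddot_rest (a : seq bool) l :=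
  flatten (map ddgamma_rest (pairmap (fun u v => drop (size u) v) a l)).

Lemma ddot_rest_cons a b l :
  ddot_rest a (b :: l) = [:: false, false & drop 2 (drop (size a) b)] ++ ddot_rest b l.
Proof. by []. Qed.

Arguments ddot_rest : simpl never.

Lemma ddot_rest_cat a l1 l2 :
  ddot_rest a (l1 ++ l2) = ddot_rest a l1 ++ ddot_rest (last a l1) l2.
Proof. by rewrite /ddot_rest pairmap_cat map_cat flatten_cat. Qed.

Lemma ddot_fE k s c l : chain F k s = c :: l ->
  ddot_f F k s = ddgamma_first F k c ++ ddot_rest c l.
Proof. by rewrite /ddot_f /gammas => ->; rewrite /= drop0. Qed.

Lemma fstar_ddot_cons k x w :
  fstar (ddot F) k (x :: w) = ddot_f F k x ++ fstar (ddot F) (tau k x) w.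
Proof. by []. Qed.

Lemma ddot_f_minimal k s : (forall t, ~~ pprefix (f k t) (f k s)) ->
  ddot_f F k s = ddgamma_first F k (f k s).
Proof. by move/chain_minimal/ddot_fE->; rewrite cats0. Qed.

Lemma ddot_f_pprefix k s x : pprefix (f k s) (f k x) ->
  exists z, ddot_f F k x = ddot_f F k s ++ [:: false, false & z].
Proof.
move=> /chain_ext[b [l Ex]]; have [c [l0 [Es _ _ _]]] := chain_struct k s.
rewrite Es /= in Ex; rewrite (ddot_fE Ex) (ddot_fE Es) ddot_rest_cat ddot_rest_cons catA.
by eexists.
Qed.

(* Two codewords covering [a] agree on their first two bits after [a], so the
   hypothesis makes them prefix-comparable; covering then forces equality. *)
Lemma covers_eq k a b b' : codeword k a -> covers k a b -> covers k a b' ->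
  prefix_cmp (drop 2 (drop (size a) b)) (drop 2 (drop (size a) b')) -> b = b'.
Proof.
case/codewordP => s <- /and3P[/pprefixP[g -> Hg] /codewordP[t Et] Hb].
case/and3P => /pprefixP[g' -> Hg'] /codewordP[t' Et'] Hb'.
rewrite !drop_size_cat // => Hcmp.
have Hbb' : prefix_cmp g g'.
  rewrite -(cat_take_drop 2 g) -(cat_take_drop 2 g').
  by rewrite (codeword_ext_take2 Et Et' Hg Hg') prefix_cmp_cat2l.
apply/eqP; apply: contraT => Hne; case/orP: Hbb' => [Hgg'|Hg'g].
  by move/forallP/(_ t): Hb'; rewrite Et pprefix_catr Hg pprefixE prefix_cat2l Hgg' Hne.
by move/forallP/(_ t'): Hb; rewrite Et' pprefix_catr Hg' pprefixE prefix_cat2l Hg'g eq_sym Hne.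
Qed.

Lemma ddot_rest_prefix k a l l' : codeword k a -> path (covers k) a l ->
  path (covers k) a l' -> prefix (ddot_rest a l) (ddot_rest a l') -> prefix l l'.
Proof.
elim: l a l' => [|b l IH] a l' Ca; first by move=> *; apply: prefix0s.
move=> /andP[Hab Hl]; case: l' => [|b' l']; first by rewrite ddot_rest_cons.
case/andP=> Hab' Hl'; rewrite !ddot_rest_cons !cat_cons !prefix_cons !eqxx !andTb => Hp.
have Ebb' := covers_eq Ca Hab Hab' (prefix_cat_cmp Hp); subst b'.
rewrite prefix_cat2l in Hp.
have Cb : codeword k b by case/and3P: Hab.
by rewrite /= eqxx (IH b l' Cb Hl Hl' Hp).
Qed.

Lemma ddgamma_first4 k g : #|P2 F k| = 4 -> ddgamma_first F k g = g.
Proof. by rewrite /ddgamma_first => ->. Qed.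

Lemma ddot_f_head_chain k x : exists c, [/\ minimal_codeword k c, prefix c (f k x)
  & prefix (ddgamma_first F k c) (ddot_f F k x)].
Proof.
have [c [l [Ex _ Mc Pc]]] := chain_struct k x.
by exists c; rewrite (ddot_fE Ex) prefix_prefix.
Qed.

Section MissingPair.
Variables (k : 'I_m) (a b : bool).
Hypothesis P2_card3 : #|P2 F k| = 3.
Hypothesis P2_miss : forall x y, ([tuple x; y] \in P2 F k) = ~~ ((x == a) && (y == b)).

Lemma ddgamma_first3 c : codeword k c ->
  [\/ c = [:: ~~ a] /\ ddgamma_first F k c = [:: true],
      exists g r, c = [:: ~~ a, g & r] /\ ddgamma_first F k c = [:: true, g & r] |
      exists r, c = [:: a, ~~ b & r] /\ ddgamma_first F k c = [:: false, true & r]].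
Proof.
case/codewordP => s Es; rewrite /ddgamma_first P2_card3 /=.
have := codeword_neq_nil s P2_card3.
have := @codeword_neq_single k s a b; rewrite P2_miss !eqxx => /(_ isT).
case: c Es => [|g1 [|g2 r]] Es; rewrite Es // => Hs _.
  by move: Hs; rewrite eqseq_cons eqxx andbT => /bool_neqE->; apply: Or31.
have : [tuple g1; g2] \in P2 F k by apply: (@P2_codeword _ _ _ _ s); rewrite Es prefix_prefix.
rewrite !P2_miss; have [->|Hg1] := eqVneq g1 a; last first.
  by move=> _; apply: Or32; exists g2, r; rewrite (bool_neqE Hg1).
move=> /= /bool_neqE->; rewrite negbK eqxx /=.
by apply: Or33; exists r.
Qed.

Lemma ddot_f_head3 x :
  prefix [:: true] (ddot_f F k x) \/ prefix [:: false; true] (ddot_f F k x).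
Proof.
have [c [l [Ex _ [Cc _] _]]] := chain_struct k x; rewrite (ddot_fE Ex).
case: (ddgamma_first3 Cc) => [[_ ->]|[g [r [_ ->]]]|[r [_ ->]]];
  [left|left|right]; apply: prefix_prefix.
Qed.

Lemma ddot_f_head1 x r : f k x = ~~ a :: r -> prefix [:: true] (ddot_f F k x).
Proof.
move=> Ex; have [c [[Cc _] Pc Hc]] := ddot_f_head_chain k x.
apply: prefix_trans Hc; rewrite Ex in Pc.
case: (ddgamma_first3 Cc) => [[_ ->]|[g [r' [_ ->]]]|[r' [Ec _]]] //.
by move: Pc; rewrite Ec /=; case: (a).
Qed.

Lemma ddot_f_head01 x r : f k x = [:: a, ~~ b & r] -> prefix [:: false; true] (ddot_f F k x).
Proof.
move=> Ex; have [c [[Cc _] Pc Hc]] := ddot_f_head_chain k x.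
apply: prefix_trans Hc; rewrite Ex in Pc.
case: (ddgamma_first3 Cc) => [[Ec _]|[g [r' [Ec _]]]|[r' [_ ->]]];
  last exact: prefix_prefix.
all: by move: Pc; rewrite Ec /=; case: (a).
Qed.

Lemma ddot_f_head2 x y r : (forall t, f k t != [:: ~~ a]) ->
  f k x = [:: ~~ a, y & r] -> prefix [:: true; y] (ddot_f F k x).
Proof.
move=> Hno Ex; have [c [[Cc _] Pc Hc]] := ddot_f_head_chain k x.
apply: prefix_trans Hc; rewrite Ex in Pc.
case: (ddgamma_first3 Cc) => [[Ec _]|[g [r' [Ec ->]]]|[r' [Ec _]]].
- by case/codewordP: Cc => t Et; have := Hno t; rewrite Et Ec eqxx.
- by move: Pc; rewrite Ec /= eqxx /= => /andP[/eqP-> _]; rewrite eqxx prefix0s.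
- by move: Pc; rewrite Ec /=; case: (a).
Qed.

Lemma P2_codeword_cons y z : [tuple y; z] \in P2 F k -> (forall t, f k t != [:: y]) ->
  exists x r, f k x = [:: y, z & r].
Proof.
case/P2P => x [w]; rewrite fstar_cons => Hp Hy; exists x.
move: Hp (Hy x) (codeword_neq_nil x P2_card3); case: (f k x) => [|y' [|z' r]] //=.
  by case/andP => /eqP <-; rewrite eqxx.
by case/andP => /eqP <- /andP[/eqP <- _]; exists r.
Qed.

Lemma codeword_cons y : exists x r, f k x = y :: r.
Proof.
have [x [w]] := fstar_head k y; rewrite fstar_cons => Hp; exists x.
move: Hp (codeword_neq_nil x P2_card3); case: (f k x) => [|y' r] //=.
by case/andP => /eqP <- _ _; exists r.
Qed.

Lemma ddot_f_exists01 : exists x, prefix [:: false; true] (ddot_f F k x).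
Proof.
have Hin : [tuple a; ~~ b] \in P2 F k by rewrite P2_miss eqxx /=; case: (b).
have Hno t : f k t != [:: a] by apply: (@codeword_neq_single k t a b); rewrite P2_miss !eqxx.
by have [x [r /ddot_f_head01 Hx]] := P2_codeword_cons Hin Hno; exists x.
Qed.

Lemma ddot_fstar_head3 y : exists x w, prefix [:: y] (fstar (ddot F) k (x :: w)).
Proof.
suff [x Hx] : exists x, prefix [:: y] (ddot_f F k x).
  by exists x, [::]; rewrite fstar_ddot_cons prefix_catl.
case: y.
  by have [x [r /ddot_f_head1 Hx]] := codeword_cons (~~ a); exists x.
by have [x Hx] := ddot_f_exists01; exists x; apply: prefix_trans Hx.
Qed.

End MissingPair.

Lemma ddot_f_nil k s : f k s = [::] -> ddot_f F k s = [::].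
Proof.
move=> Es; have [_ Hk] := empty_codeword_card Es.
by rewrite ddot_f_minimal Es ?ddgamma_first4 // => t; rewrite /pprefix ltn0 andbF.
Qed.

Lemma ddot_fstar_head k y : exists x w, prefix [:: y] (fstar (ddot F) k (x :: w)).
Proof.
have [Hk|Hk] := card_P2 k.
  by have [a [b Hab]] := card3_tuple2 Hk; apply: ddot_fstar_head3 Hab y.
have [s0 /eqP Es0|Hne] := pickP (fun s => f k s == [::]).
  have [Htau _] := empty_codeword_card Es0; have [a [b Hab]] := card3_tuple2 Htau.
  have [x [w Hp]] := ddot_fstar_head3 Htau Hab y.
  by exists s0, (x :: w); rewrite fstar_ddot_cons ddot_f_nil.
have [x [w]] := fstar_head k y; rewrite fstar_cons => Hp.
have [c [[/codewordP[s Es] _] Pc Hc]] := ddot_f_head_chain k x.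
rewrite ddgamma_first4 // in Hc; exists x, [::]; rewrite fstar_ddot_cons; apply: prefix_catl.
apply: prefix_trans Hc; have := prefixes_cmp (prefix_catl _ Pc) Hp.
move: (Hne s); rewrite Es; case: c {Es Pc} => [|g r] //= _.
by rewrite prefix_cmp_cons => /andP[/eqP-> _]; rewrite eqxx prefix0s.
Qed.

Lemma minimal_codeword_eq k c c' : minimal_codeword k c -> minimal_codeword k c' ->
  prefix_cmp c c' -> c = c'.
Proof.
move=> [/codewordP[t <-] Mt] [/codewordP[t' <-] Mt'].
case/orP => Htt'; apply/eqP; apply: contraT => Hne.
  by have := Mt' t; rewrite pprefixE Htt' Hne.
by have := Mt t'; rewrite pprefixE Htt' eq_sym Hne.
Qed.

Lemma ddgamma_first_inj k c c' : minimal_codeword k c -> minimal_codeword k c' ->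
  prefix_cmp (ddgamma_first F k c) (ddgamma_first F k c') -> c = c'.
Proof.
move=> Mc Mc' Hcmp; apply: (minimal_codeword_eq Mc Mc').
have [Hk|Hk] := card_P2 k; last by rewrite !ddgamma_first4 in Hcmp.
have [a [b Hab]] := card3_tuple2 Hk; move: Hcmp.
case: (ddgamma_first3 Hk Hab Mc.1) => [[-> E]|[g [r [-> E]]]|[r [-> E]]];
case: (ddgamma_first3 Hk Hab Mc'.1) => [[-> E']|[g' [r' [-> E']]]|[r' [-> E']]];
  by rewrite E ?E' ?prefix_cmp_cons ?eqxx ?prefix_cmp0s.
Qed.

Lemma ddot_f_prefix k s x : prefix (ddot_f F k s) (ddot_f F k x) -> prefix (f k s) (f k x).
Proof.
have [c [l [Es Ps Mc _]]] := chain_struct k s.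
have [c' [l' [Ex Px Mc' _]]] := chain_struct k x.
rewrite (ddot_fE Es) (ddot_fE Ex) => Hp.
have Ecc' := ddgamma_first_inj Mc Mc' (prefix_cat_cmp Hp); subst c'.
rewrite prefix_cat2l in Hp.
have /prefixP[l'' El'] := ddot_rest_prefix Mc.1 Ps Px Hp.
have : f k s \in chain F k x.
  by rewrite Ex El' -cat_cons mem_cat -Es mem_chain codeword_f prefix_refl.
by rewrite mem_chain => /andP[].
Qed.

Lemma P2_ddot3 k : #|P2 F k| = 3 ->
  P2 (ddot F) k = [set [tuple false; true]; [tuple true; false]; [tuple true; true]].
Proof.
move=> Hk; have [a [b Hab]] := card3_tuple2 Hk.
apply/setP; elim/tuple2_ind => x y; rewrite !in_setU !in_set1 !eq_tuple2; apply/idP/idP.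
  case/P2P => s [w]; rewrite fstar_ddot_cons => Hp.
  case: (ddot_f_head3 Hk Hab s) => /(prefix_catl (fstar (ddot F) (tau k s) w));
    by move/(prefixes_cmp Hp); clear Hp; case: x; case: y.
case: x => /=; last first.
  by case: y => // _; have [x Hx] := ddot_f_exists01 Hk Hab; apply: (P2_codeword (F := ddot F) Hx).
move=> _; have [s /eqP Es|Hno] := pickP (fun s => f k s == [:: ~~ a]).
  have Hs : ddot_f F k s = [:: true].
    rewrite ddot_f_minimal Es /ddgamma_first ?Hk // => t.
    by rewrite /pprefix ltnS leqn0 size_eq0 (negbTE (codeword_neq_nil t Hk)) andbF.
  have [x [w Hw]] := ddot_fstar_head (tau k s) y.
  by apply/P2P; exists s, (x :: w); rewrite fstar_ddot_cons Hs.
have Hin : [tuple ~~ a; y] \in P2 F k by rewrite Hab; case: (a).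
have Hno' t : f k t != [:: ~~ a] by apply/negbT/Hno.
have [x [r Ex]] := P2_codeword_cons Hk Hin Hno'.
exact: (P2_codeword (F := ddot F) (ddot_f_head2 Hk Hab Hno' Ex)).
Qed.

Lemma mem_P2_ddot_nil k s0 c : f k s0 = [::] -> c \in P2 (ddot F) k.
Proof.
move=> Es0; have [Htau _] := empty_codeword_card Es0.
elim/tuple2_ind: c => x y; have [Hxy|Hxy] := boolP (x || y).
  have : [tuple x; y] \in P2 (ddot F) (tau k s0).
    by rewrite P2_ddot3 // !in_setU !in_set1 !eq_tuple2; move: Hxy; case: x; case: y.
  case/P2P => x' [w Hp]; apply/P2P; exists s0, (x' :: w).
  by rewrite fstar_ddot_cons ddot_f_nil.
have [t Ht] := exists_neq s0.
have Hst : pprefix (f k s0) (f k t).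
  by apply/pprefixP; exists (f k t); rewrite ?Es0 // -Es0 (inj_eq (@codeword_inj k)).
have [z Ez] := ddot_f_pprefix Hst; apply: (P2_codeword (F := ddot F) (s := t)).
by rewrite /= Ez ddot_f_nil //; move: Hxy; case: x; case: y => //= _; apply: prefix_prefix.
Qed.

(* A pair is realised by a first codeword [c] of a gamma-chain, which [ddgamma_first]
   leaves unchanged; if [c] has a single bit, the second one comes from the next table. *)
Lemma mem_P2_ddot4 k c : #|P2 F k| = 4 -> (forall s, f k s != [::]) ->
  c \in P2 (ddot F) k.
Proof.
move=> Hk Hne; elim/tuple2_ind: c => x y.
case/P2P: (card4_tuple2 Hk [tuple x; y]) => x1 [w]; rewrite fstar_cons => Hp.
have [c [[/codewordP[s Es] Mc] Pc _]] := ddot_f_head_chain k x1.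
have Hs : ddot_f F k s = c by rewrite ddot_f_minimal ?Es ?ddgamma_first4.
have := prefixes_cmp Hp (prefix_catl _ Pc).
move: (Hne s); rewrite Es; case: c {Es Pc Mc} Hs => [|g1 [|g2 r]] Hs //= _.
  rewrite prefix_cmp_cons => /andP[/eqP-> _].
  have [x' [w' Hw]] := ddot_fstar_head (tau k s) y.
  by apply/P2P; exists s, (x' :: w'); rewrite fstar_ddot_cons Hs /= eqxx.
rewrite !prefix_cmp_cons => /and3P[/eqP-> /eqP-> _].
by apply: (P2_codeword (F := ddot F) (s := s)); rewrite /= Hs prefix_prefix.
Qed.

Lemma P2_ddot4 k : #|P2 F k| = 4 -> P2 (ddot F) k =
  [set [tuple false; false]; [tuple false; true]; [tuple true; false]; [tuple true; true]].
Proof.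
move=> Hk; apply/setP; elim/tuple2_ind => x y.
rewrite !in_setU !in_set1 !eq_tuple2 [RHS](_ : _ = true); last by case: x; case: y.
have [s0 /eqP Es0|Hne] := pickP (fun s => f k s == [::]).
  exact: mem_P2_ddot_nil Es0.
by apply: mem_P2_ddot4 => // s; rewrite Hne.
Qed.

Lemma Pbark0_codewordP k s :
  reflect (exists t, pprefix (f k s) (f k t)) (Pbark F k (f k s) 0 != set0).
Proof.
apply: (iffP (set0Pn _)) => [[c /PbarkP[t [w [_ Ht]]]]|[t Ht]]; first by exists t.
exists [tuple]; apply/PbarkP; exists t, [::]; split=> //.
by rewrite cats0 fstar_cons prefix_catl ?pprefixW.
Qed.

Lemma Pbark_ddot_f k s c : c \in Pbark (ddot F) k (ddot_f F k s) 2 ->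
  c = [tuple false; false] /\ exists t, pprefix (f k s) (f k t).
Proof.
case/PbarkP => x [w [Hp Hpp]].
have Hsx : pprefix (f k s) (f k x).
  rewrite pprefixE (ddot_f_prefix (pprefixW Hpp)) /=.
  by apply/eqP => /codeword_inj Esx; rewrite Esx pprefix_irr in Hpp.
split; last by exists x.
have [z Ez] := ddot_f_pprefix Hsx.
move: Hp; rewrite fstar_ddot_cons Ez -catA prefix_cat2l.
by elim/tuple2_ind: c => x' y' /=; case: x'; case: y'.
Qed.

Lemma Pbark_ddot_fE k s : Pbark (ddot F) k (ddot_f F k s) 2 =
  if Pbark F k (f k s) 0 == set0 then set0 else [set [tuple false; false]].
Proof.
apply/setP => c; rewrite -[_ == set0]negbK.
case: Pbark0_codewordP => [[t Ht]|Hno] /=; rewrite ?in_set0 ?in_set1; last first.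
  by apply/negbTE/negP => /Pbark_ddot_f[_ /Hno].
apply/idP/eqP => [/Pbark_ddot_f[] //|->].
have [z Ez] := ddot_f_pprefix Ht; apply/PbarkP; exists t, [::]; split.
  by rewrite fstar_ddot_cons Ez -catA prefix_cat2l prefix_prefix.
by rewrite /= Ez pprefix_catr.
Qed.

End TwoDecodable.

Theorem lemma26 (S : finType) (HS : 1 < #|S|) (R : realType) (mu : S -> R)
  (Hmu_pos : forall s, (0 < mu s)%R /\ (mu s <= 1)%R)
  (Hmu_sum : (\sum_(s : S) mu s)%R = 1%R)
  (m : nat) (F : code_tuple S m) (HF : in_F2 mu F) (i : 'I_m) :
  (#|P2 F i| = 3 ->
     P2 (ddot F) i = [set [tuple false; true]; [tuple true; false]; [tuple true; true]]) /\
  (#|P2 F i| = 4 ->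
     P2 (ddot F) i = [set [tuple false; false]; [tuple false; true];
                          [tuple true; false]; [tuple true; true]]) /\
  (forall s : S,
     (Pbark F i (ct_f F i s) 0 = set0 -> Pbark (ddot F) i (ddot_f F i s) 2 = set0) /\
     (Pbark F i (ct_f F i s) 0 != set0 ->
        Pbark (ddot F) i (ddot_f F i s) 2 = [set [tuple false; false]])).
Proof.
case: HF => _ [F2dec P2_ge3].
split; first exact: P2_ddot3.
split; first exact: P2_ddot4.
by move=> s; rewrite Pbark_ddot_fE //; split=> [->|/negbTE->]; rewrite ?eqxx.
Qed.
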